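(* Let $k$ be a field of characteristic zero and $f,g\in k[x,y,z]$. Suppose $\gcd(d(L(f)),d(L(g)))\in k[x]\setminus k$, $g$ is primitive and $g(x,0,0)=0$. Assume there exist non-negative integers $p,q$ with $(p,q)\ne(0,0)$ such that, for the grading $\deg y=p$, $\deg z=q$, the polynomial $\overline f$ is primitive and $\deg\overline f>\deg\overline g$. Then there is no $k[x]$-automorphism $\zeta$ of $k[x,y,z]$ with $\zeta(y)=u_1(v_0g+F_0(f))$ for any $u_1,v_0\in k(x)$ and $F_0\in k(x)[t]$.
   Context: Polynomials in $k[x,y,z]$ (or $k(x)[y,z]$) are regarded as polynomials in $y,z$ with coefficients in $k[x]$ (or $k(x)$). For $h\in k[x,y,z]$, $d(h)$ is the greatest common divisor in $k[x]$ of the coefficients of $h$ as a polynomial in $y,z$; $h$ is primitive if $d(h)=1$ (up to units). $L(h)$ is the sum of the terms of $h$ of total degree exactly $1$ in $y,z$. For the $\mathbb Z$-grading with $\deg y=p$, $\deg z=q$, $\overline h$ is the sum of the terms of $h$ of highest degree, and $\deg\overline h$ is that degree. *)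

From HB Require Import structures.
From mathcomp Require Import all_boot all_order all_algebra.
From mathcomp Require Import fraction.
From mathcomp Require Import mpoly.
Set Implicit Arguments. Unset Strict Implicit. Unset Printing Implicit Defensive.
Import Order.TTheory GRing.Theory.
Local Open Scope ring_scope.

(* k[x,y,z] is represented as {mpoly {poly k}[2]}: polynomials in the two
   variables y = 'X_yvar, z = 'X_zvar with coefficients in k[x] = {poly k}.
   k(x)[y,z] is {mpoly {fraction {poly k}}[2]}. *)

Definition yvar : 'I_2 := ord0.
Definition zvar : 'I_2 := ord_max.

Section Defs.
Variable k : fieldType.
Notation R := {mpoly {poly k}[2]}.
Notation K := {fraction {poly k}}.
Notation RK := {mpoly K[2]}.

Definition dcont (h : R) : {poly k} := \big[@gcdp k/0]_(m <- msupp h) h@_m.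

Definition primitive (h : R) : Prop := dcont h %= 1.

Definition linpart (h : R) : R :=
  \sum_(m <- msupp h | mdeg m == 1%N) h@_m *: 'X_[m].

Definition mwdeg (p q : nat) (m : 'X_{1..2}) : nat := (p * m yvar + q * m zvar)%N.

Definition wdeg (p q : nat) (h : R) : nat := \max_(m <- msupp h) mwdeg p q m.

Definition wtop (p q : nat) (h : R) : R :=
  \sum_(m <- msupp h | mwdeg p q m == wdeg p q h) h@_m *: 'X_[m].

Definition kx_automorphism (zeta : R -> R) : Prop :=
  [/\ forall a b, zeta (a + b) = zeta a + zeta b,
      forall a b, zeta (a * b) = zeta a * zeta b,
      zeta 1 = 1,
      forall c : {poly k}, zeta (c%:MP) = c%:MP
    & bijective zeta].

Definition toK (h : R) : RK := map_mpoly (fun c : {poly k} => @tofrac _ c) h.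

Definition peval (F0 : {poly K}) (f : RK) : RK :=
  \sum_(i < size F0) F0`_i *: f ^+ i.

End Defs.

From HB Require Import structures.
From mathcomp Require Import all_boot all_order all_algebra.
From mathcomp Require Import fraction generic_quotient qpoly qfpoly.
From mathcomp Require Import mpoly.
From mathcomp Require Import ring zify.
From Stdlib Require Import Classical.

Set Implicit Arguments.
Unset Strict Implicit.
Unset Printing Implicit Defensive.

Import Order.TTheory GRing.Theory.
Local Open Scope ring_scope.

(* Let pi be a monic irreducible factor of gcd(d(L(f)), d(L(g))); it divides
   the coefficients of y and z in f and in g.  Clearing denominators,
   D zeta(y) = al g + sum_i be_i f^i with D, al, be_i in k[x].  If pi | D,
   reduce modulo pi and substitute y -> y t^p, z -> z t^q: as the top part of
   f is primitive, the image of f has t-degree exactly deg(overline f), while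
   that of g is nonzero (g is primitive) of smaller t-degree.  Comparing
   t-degrees, sum_i be_i T^i is constant mod pi, its constant term vanishes
   because g(x,0,0) = 0, and then al = 0 mod pi: so pi may be cancelled, and
   eventually D is prime to pi.  Then pi divides the linear coefficients of
   zeta(y).  For an automorphism this is absurd: the linear parts of all
   zeta(P) would lie, mod pi, on the line spanned by that of zeta(z), whereas
   y and z themselves are values of zeta with independent linear parts. *)

Lemma bigmax_seq_attained (T : eqType) (s : seq T) (F : T -> nat) :
  s != [::] -> exists2 x, x \in s & \max_(y <- s) F y = F x.
Proof.
elim: s => // x s IH _; rewrite big_cons.
have [->|/IH[z zs ->]] := eqVneq s [::].
  by exists x; rewrite ?mem_head // big_nil maxn0.
have [le|lt] := leqP (F z) (F x).
  by exists x; rewrite ?mem_head ?(maxn_idPl le).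
by exists z; rewrite ?in_cons ?zs ?orbT ?(maxn_idPr (ltnW lt)).
Qed.

Lemma size_le1_comp_poly (R : idomainType) (P F : {poly R}) :
  (1 < size F)%N -> (size (P \Po F) < size F)%N -> (size P <= 1)%N.
Proof.
move=> F_gt1; have := size_comp_poly P F; rewrite -!subn1.
set a := size (P \Po F); set b := size P; set c := size F; nia.
Qed.

Lemma monic_irreducible_dvdp (k : fieldType) (a : {poly k}) :
  (1 < size a)%N -> exists2 pi, monic_irreducible_poly pi & pi %| a.
Proof.
have [n] := ubnP (size a); elim: n a => // n IH a size_a a_gt1.
have a_neq0 : a != 0 by rewrite -size_poly_gt0 ltnW.
have [a_irr|a_red] := classic (irreducible_poly a).
  have lc_neq0 : (lead_coef a)^-1 != 0 by rewrite invr_eq0 lead_coef_eq0.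
  exists ((lead_coef a)^-1 *: a); last by rewrite dvdpZl.
  split; last by rewrite monicE lead_coefZ mulVf ?lead_coef_eq0.
  split=> [|d d_neq1]; first by rewrite size_scale.
  rewrite !(eqp_dvdr _ (eqp_scale _ lc_neq0)) => /(a_irr d d_neq1).
  by move/eqp_trans; apply; rewrite eqp_sym eqp_scale.
have [d [d_neq1 da d_nsim]] : exists d : {poly k}, [/\ size d != 1, d %| a & ~~ (d %= a)].
  apply: NNPP => no_d; apply: a_red; split=> // d d_neq1 da.
  by apply: NNPP => /negP d_nsim; apply: no_d; exists d.
have d_gt1 : (1 < size d)%N.
  rewrite ltn_neqAle eq_sym d_neq1 size_poly_gt0.
  by apply: contraNneq a_neq0 => d0; move: da; rewrite d0 dvd0p.
have size_d : (size d < n)%N.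
  rewrite -ltnS (leq_trans _ size_a) // ltnS ltn_neqAle dvdp_leq // andbT.
  by apply: contraNneq d_nsim => /eqP; rewrite dvdp_size_eqp.
have [pi pi_mi pi_d] := IH d size_d d_gt1.
by exists pi; last exact: dvdp_trans da.
Qed.

Lemma fraction_repr (R : idomainType) (x : {fraction R}) :
  exists a b, b != 0 /\ x = tofrac a / tofrac b.
Proof.
elim/quotW: x => x; exists \n_x, \d_x; split; first exact: denom_ratioP.
unlock FracField.tofrac.
change (\pi_{fraction R} x = FracField.mul (\pi_{fraction R} (Ratio \n_x 1))
  (FracField.inv (\pi_{fraction R} (Ratio \d_x 1))))%qT.
rewrite -FracField.pi_inv -FracField.pi_mul.
apply/eqmodP; rewrite /= FracField.equivfE /FracField.mulf /FracField.invf /=.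
by rewrite !numden_Ratio ?mul1r ?mulr1 ?oner_neq0 ?denom_ratioP // mulrC.
Qed.

Lemma common_denominator (R : idomainType) (s : seq {fraction R}) :
  exists D (num : {fraction R} -> R),
    D != 0 /\ {in s, forall x, x * tofrac D = tofrac (num x)}.
Proof.
elim: s => [|x s [D [num [D_neq0 Dnum]]]].
  by exists 1, (fun=> 0); split=> [|x]; rewrite ?oner_neq0.
have [a [b [b_neq0 xE]]] := fraction_repr x.
exists (D * b), (fun y => if y == x then a * D else num y * b).
split=> [|y]; first by rewrite mulf_neq0.
rewrite in_cons; case: eqP => [-> _|_ /= ys]; last by rewrite !tofracM mulrA Dnum.
have tb_neq0 : tofrac b != 0 by rewrite tofrac_eq0.
by rewrite xE !tofracM mulrCA divfK // mulrC.
Qed.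

Section MPolyCoef.
Variables (n : nat) (A : comNzRingType).
Implicit Types (P Q : {mpoly A[n]}).

Lemma mcoeff_sum_uniq (s : seq 'X_{1..n}) (E : 'X_{1..n} -> A) m : uniq s ->
  (\sum_(m' <- s) E m' *: 'X_[m'])@_m = if m \in s then E m else 0.
Proof.
move=> s_uniq; rewrite raddf_sum /=.
under eq_bigr => m' _ do rewrite mcoeffZ mcoeffX.
case: ifPn => [ms|mNs].
  rewrite (bigD1_seq m ms s_uniq) /= eqxx mulr1 big1 ?addr0 // => m' /negPf.
  by rewrite eq_sym => ->; rewrite mulr0.
rewrite big_seq big1 // => m' m's.
by rewrite (_ : (m' == m) = false) ?mulr0 //; apply: contraNF mNs => /eqP <-.
Qed.

Lemma mcoeff_sum_msupp_filter P (C : pred 'X_{1..n}) m :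
  (\sum_(m' <- msupp P | C m') P@_m' *: 'X_[m'])@_m = if C m then P@_m else 0.
Proof.
rewrite big_mkcond (eq_bigr (fun m' => (if C m' then P@_m' else 0) *: 'X_[m'])) /=.
  rewrite mcoeff_sum_uniq ?msupp_uniq //.
  by case: ifPn => // /memN_msupp_eq0 ->; rewrite if_same.
by move=> m' _; case: (C m'); rewrite ?scale0r.
Qed.

Lemma mcoeffUM P Q i : (P * Q)@_U_(i) = P@_0 * Q@_U_(i) + P@_U_(i) * Q@_0.
Proof.
have mcoeffU R : R@_U_(i) = (R^`M(i))@_0 by rewrite mcoeff_mderiv add0m mnm0E.
by rewrite !mcoeffU mderivM mcoeffD !(mcoeff0_is_multiplicative _ _).1 addrC.
Qed.
End MPolyCoef.

Section Content.
Variable k : fieldType.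
Implicit Types (P : {mpoly {poly k}[2]}) (pi : {poly k}).

Lemma dcont_dvdp_mcoeff P m : dcont P %| P@_m.
Proof.
have [|/memN_msupp_eq0 ->] := boolP (m \in msupp P); last exact: dvdp0.
rewrite /dcont; elim: (msupp P) => // m' s IH.
rewrite in_cons big_cons => /predU1P[->|/IH]; first exact: dvdp_gcdl.
exact/dvdp_trans/dvdp_gcdr.
Qed.

Lemma dvdp_dcont d P : (forall m, d %| P@_m) -> d %| dcont P.
Proof.
move=> dP; rewrite /dcont; elim: (msupp P) => [|m s IH]; first by rewrite big_nil dvdp0.
by rewrite big_cons dvdp_gcd dP.
Qed.

Lemma primitive_ndvdp_mcoeff pi P :
  (1 < size pi)%N -> primitive P -> exists m, ~~ (pi %| P@_m).
Proof.
move=> pi_gt1 Pprim; apply/not_all_not_ex => piP.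
have : pi %| dcont P by apply: dvdp_dcont => m; apply/negPn/negP/piP.
by rewrite (eqp_dvdr _ Pprim) dvdp1 => /eqP pi1; rewrite pi1 in pi_gt1.
Qed.

Lemma mcoeffU_linpart P i : (linpart P)@_U_(i) = P@_U_(i).
Proof. by rewrite /linpart mcoeff_sum_msupp_filter mdeg1. Qed.

Lemma dcont_linpart_dvdp_mcoeffU P i : dcont (linpart P) %| P@_U_(i).
Proof. by rewrite -mcoeffU_linpart dcont_dvdp_mcoeff. Qed.

End Content.

Section WeightedDegree.
Variables (k : fieldType) (p q : nat).
Implicit Types (P : {mpoly {poly k}[2]}).

Lemma mwdeg_le_wdeg P m : m \in msupp P -> (mwdeg p q m <= wdeg p q P)%N.
Proof. by move=> mP; rewrite (leq_bigmax_seq (P := xpredT)). Qed.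

Lemma mcoeff_wtop P m :
  (wtop p q P)@_m = if mwdeg p q m == wdeg p q P then P@_m else 0.
Proof. exact: mcoeff_sum_msupp_filter. Qed.

Lemma wdeg_wtop P : wdeg p q (wtop p q P) = wdeg p q P.
Proof.
apply/eqP; rewrite eqn_leq; apply/andP; split.
  apply/bigmax_leqP_seq => m; rewrite mcoeff_msupp mcoeff_wtop.
  by case: ifP => [/eqP ->|_]; rewrite ?eqxx.
have [P0|/(bigmax_seq_attained (mwdeg p q))[m mP Pm]] := eqVneq (msupp P) [::].
  by rewrite /wdeg P0 big_nil.
rewrite {1}/wdeg Pm mwdeg_le_wdeg // mcoeff_msupp mcoeff_wtop /wdeg Pm eqxx.
by rewrite -mcoeff_msupp.
Qed.

End WeightedDegree.

Section LinearCoefficientsModulo.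
Variables (k : fieldType) (n : nat) (pi : {poly k}) (v : 'I_n -> {poly k}).
Implicit Types (P Q : {mpoly {poly k}[n]}).

(* As (P Q)_U = P_0 Q_U + P_U Q_0, these P form a k[x]-subalgebra. *)
Definition lincoef_in_span P := exists t, forall i, pi %| P@_U_(i) - t * v i.

Lemma lincoef_in_spanD P Q :
  lincoef_in_span P -> lincoef_in_span Q -> lincoef_in_span (P + Q).
Proof.
move=> [s Ps] [t Qt]; exists (s + t) => i; rewrite mcoeffD.
have -> : P@_U_(i) + Q@_U_(i) - (s + t) * v i =
  (P@_U_(i) - s * v i) + (Q@_U_(i) - t * v i) by ring.
by rewrite dvdp_add.
Qed.

Lemma lincoef_in_spanM P Q :
  lincoef_in_span P -> lincoef_in_span Q -> lincoef_in_span (P * Q).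
Proof.
move=> [s Ps] [t Qt]; exists (P@_0 * t + Q@_0 * s) => i; rewrite mcoeffUM.
have -> : P@_0 * Q@_U_(i) + P@_U_(i) * Q@_0 - (P@_0 * t + Q@_0 * s) * v i =
  P@_0 * (Q@_U_(i) - t * v i) + Q@_0 * (P@_U_(i) - s * v i) by ring.
by rewrite dvdp_add ?dvdp_mull.
Qed.

Lemma lincoef_in_spanC c : lincoef_in_span c%:MP.
Proof. by exists 0 => i; rewrite mcoeffC mnm1_eq0 mulr0 mul0r subr0 dvdp0. Qed.

Lemma lincoef_in_spanZ c P : lincoef_in_span P -> lincoef_in_span (c *: P).
Proof. by rewrite -mul_mpolyC; apply/lincoef_in_spanM/lincoef_in_spanC. Qed.

Lemma lincoef_in_spanXn P e : lincoef_in_span P -> lincoef_in_span (P ^+ e).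
Proof.
move=> PS; elim: e => [|e IH]; first by rewrite expr0 -mpolyC1; apply: lincoef_in_spanC.
by rewrite exprS; apply: lincoef_in_spanM.
Qed.

Lemma lincoef_in_span_morph (zeta : {mpoly {poly k}[n]} -> {mpoly {poly k}[n]}) :
  {morph zeta : P Q / P + Q} -> {morph zeta : P Q / P * Q} ->
  (forall c, zeta c%:MP = c%:MP) ->
  (forall i, lincoef_in_span (zeta 'X_i)) -> forall P, lincoef_in_span (zeta P).
Proof.
move=> zetaD zetaM zetaC zetaX.
have zeta1 : zeta 1 = 1 by rewrite -mpolyC1 zetaC.
have zetaXn i e : zeta ('X_i ^+ e) = zeta 'X_i ^+ e.
  by elim: e => [|e IH]; rewrite ?expr0 ?zeta1 // !exprS zetaM IH.
elim/mpolyind => [|c m P _ _ IH]; first by rewrite -mpolyC0 zetaC; apply: lincoef_in_spanC.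
rewrite zetaD -mul_mpolyC zetaM zetaC mul_mpolyC; apply: lincoef_in_spanD => //.
apply: lincoef_in_spanZ; rewrite mpolyXE_id.
apply: (big_ind (fun Q => lincoef_in_span (zeta Q))).
- by rewrite zeta1 -mpolyC1; apply: lincoef_in_spanC.
- by move=> Q1 Q2 HQ1 HQ2; rewrite zetaM; apply: lincoef_in_spanM.
- by move=> i _; rewrite zetaXn; apply: lincoef_in_spanXn.
Qed.

End LinearCoefficientsModulo.

Lemma lincoef_in_span0 (k : fieldType) n (pi : {poly k}) (P : {mpoly {poly k}[n]}) :
  lincoef_in_span pi (fun=> 0) P <-> forall i, pi %| P@_U_(i).
Proof.
split=> [[t Pt] i|PU]; last by exists 0 => i; rewrite mul0r subr0.
by have := Pt i; rewrite mulr0 subr0.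
Qed.

Lemma relation_lincoef_dvdp (k : fieldType) n (pi : {poly k}) (f g h : {mpoly {poly k}[n]})
    D al (be : nat -> {poly k}) N :
  (forall i, pi %| f@_U_(i)) -> (forall i, pi %| g@_U_(i)) -> coprimep pi D ->
  D *: h = al *: g + \sum_(i < N) be i *: f ^+ i -> forall i, pi %| h@_U_(i).
Proof.
move=> /lincoef_in_span0 fS /lincoef_in_span0 gS piD hE i.
suff /lincoef_in_span0/(_ i) : lincoef_in_span pi (fun=> 0) (D *: h).
  by rewrite mcoeffZ Gauss_dvdpr.
rewrite hE; apply: lincoef_in_spanD; first exact: lincoef_in_spanZ.
apply: (big_ind (lincoef_in_span pi _)).
- by rewrite -mpolyC0; apply: lincoef_in_spanC.
- exact: lincoef_in_spanD.
- by move=> j _; apply/lincoef_in_spanZ/lincoef_in_spanXn.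
Qed.

Lemma kx_automorphism_lincoef_ndvdp (k : fieldType) (pi : {poly k})
    (zeta : {mpoly {poly k}[2]} -> {mpoly {poly k}[2]}) :
  (1 < size pi)%N -> kx_automorphism zeta ->
  ~ (forall i, pi %| (zeta 'X_yvar)@_U_(i)).
Proof.
move=> pi_gt1 [zetaD zetaM _ zetaC [zinv zetaK zinvK]] piy.
pose v i := (zeta 'X_zvar)@_U_(i).
have spanX i : lincoef_in_span pi v (zeta 'X_i).
  have [->|->] : i = yvar \/ i = zvar.
    by case: i => -[|[|//]] ?; [left|right]; apply: val_inj.
  - by exists 0 => j; rewrite mul0r subr0.
  - by exists 1 => j; rewrite mul1r subrr dvdp0.
have span P : lincoef_in_span pi v P.
  by rewrite -[P]zinvK; apply: lincoef_in_span_morph.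
have [[s ys] [t zt]] := (span 'X_yvar, span 'X_zvar).
have := ys yvar; have := ys zvar; have := zt yvar; have := zt zvar.
rewrite !mcoeffXU /= => zz zy yz yy; clearbody v.
(* The determinant 1 of the linear parts of y and z vanishes mod pi. *)
have : pi %| 1.
  have -> : (1 : {poly k}) = (1 - s * v yvar) + s * v yvar * (1 - t * v zvar)
                + (0 - s * v zvar) * (0 - t * v yvar) by ring.
  by apply: dvdp_add; [apply: dvdp_add; last apply: dvdp_mull | apply: dvdp_mulr].
by rewrite dvdp1 => /eqP pi1; rewrite pi1 in pi_gt1.
Qed.

Section WeightedEmbedding.
Variables (k : fieldType) (K : idomainType) (r : {rmorphism {poly k} -> K}) (p q : nat).
Local Notation S := {mpoly K[2]}.

Definition wembedC (a : {poly k}) : {poly S} := (r a)%:MP%:P.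

Fact wembedC_is_zmod_morphism : zmod_morphism wembedC.
Proof. by move=> a b; rewrite /wembedC !rmorphB. Qed.
HB.instance Definition _ := GRing.isZmodMorphism.Build _ _ wembedC wembedC_is_zmod_morphism.

Fact wembedC_is_monoid_morphism : monoid_morphism wembedC.
Proof. by split=> [|a b]; rewrite /wembedC ?rmorph1 // !rmorphM. Qed.
HB.instance Definition _ := GRing.isMonoidMorphism.Build _ _ wembedC wembedC_is_monoid_morphism.

Definition wembedX (i : 'I_2) : {poly S} := ('X_i)%:P * 'X^(if i == yvar then p else q).

(* Reduction of the coefficients along r, and y -> y t^p, z -> z t^q, where t
   is the variable of {poly S}: the t-degree becomes the weighted degree. *)
Definition wembed (P : {mpoly {poly k}[2]}) : {poly S} := mmap wembedC wembedX P.

Fact wembed_is_zmod_morphism : zmod_morphism wembed.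
Proof. exact: raddfB. Qed.
HB.instance Definition _ := GRing.isZmodMorphism.Build _ _ wembed wembed_is_zmod_morphism.

Fact wembed_is_monoid_morphism : monoid_morphism wembed.
Proof. by split=> [|P Q]; rewrite /wembed ?rmorph1 // rmorphM. Qed.
HB.instance Definition _ := GRing.isMonoidMorphism.Build _ _ wembed wembed_is_monoid_morphism.

Lemma wembedZ c P : wembed (c *: P) = wembedC c * wembed P.
Proof. exact: mmapZ. Qed.

Lemma wembed_relation f g h D al (be : nat -> {poly k}) N :
  D *: h = al *: g + \sum_(i < N) be i *: f ^+ i ->
  wembedC D * wembed h =
    wembedC al * wembed g + (\poly_(i < N) (r (be i))%:MP_[2] \Po wembed f).
Proof.
move=> hE; rewrite -wembedZ hE rmorphD rmorph_sum /= wembedZ; congr (_ + _).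
rewrite /comp_poly (horner_coef_wide (n := N)) ?size_map_polyC ?size_poly //.
by apply: eq_bigr => i _; rewrite wembedZ rmorphXn coef_map coef_poly ltn_ord.
Qed.

Lemma mmap1_wembedX m : mmap1 wembedX m = ('X_[m])%:P * 'X^(mwdeg p q m).
Proof.
rewrite /mmap1 mpolyXE_id !big_ord_recl !big_ord0 !mulr1 /wembedX /mwdeg.
have -> : lift ord0 ord0 = zvar by apply: val_inj.
rewrite eqxx (_ : zvar == yvar = false) // !exprMn -!exprM mulrACA -exprD.
by rewrite !rmorphM !rmorphXn ![(_ * m _)%N]mulnC.
Qed.

Lemma coef_wembed P d m : ((wembed P)`_d)@_m = (mwdeg p q m == d)%:R * r P@_m.
Proof.
rewrite /wembed /mmap coef_sum.
under eq_bigr => m' _ do rewrite /wembedC /= mmap1_wembedX mulrA -polyCM mul_mpolyC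
  mul_polyC coefZ coefXn mulr_natr scalerMnl -mulr_natl eq_sym.
rewrite mcoeff_sum_uniq ?msupp_uniq //.
by case: ifPn => // /memN_msupp_eq0 ->; rewrite rmorph0 mulr0.
Qed.

Lemma size_wembed P : (size (wembed P) <= (wdeg p q P).+1)%N.
Proof.
apply/leq_sizeP => d lt_d; apply/mpolyP => m; rewrite coef_wembed mcoeff0.
have [/(mwdeg_le_wdeg p q) le_m|/memN_msupp_eq0 ->] := boolP (m \in msupp P).
  by rewrite ltn_eqF ?mul0r // (leq_ltn_trans le_m).
by rewrite rmorph0 mulr0.
Qed.

Lemma size_wembed_gt P m : r P@_m != 0 -> (mwdeg p q m < size (wembed P))%N.
Proof.
move=> Pm; rewrite ltnNge; apply: contra Pm => /(nth_default 0)/(congr1 (mcoeff m)).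
by rewrite coef_wembed eqxx mul1r mcoeff0 => ->.
Qed.

End WeightedEmbedding.

Section WeightedRelation.
Variables (k : fieldType) (K : idomainType) (r : {rmorphism {poly k} -> K}) (p q : nat).
Variables f g : {mpoly {poly k}[2]}.
Hypothesis f_top : exists m, mwdeg p q m = wdeg p q f /\ r f@_m != 0.
Hypothesis g_below : (wdeg p q g < wdeg p q f)%N.
Hypothesis g_nz : exists m, r g@_m != 0.
Hypothesis g0 : g@_0 = 0.

Lemma relation_coefs_in_kernel h D al (be : nat -> {poly k}) N :
  r D = 0 -> D *: h = al *: g + \sum_(i < N) be i *: f ^+ i ->
  r al = 0 /\ forall i, (i < N)%N -> r (be i) = 0.
Proof.
move=> rD hE.
set F := wembed r p q f; set G := wembed r p q g.
pose pol := \poly_(i < N) (r (be i))%:MP_[2].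
have relE : wembedC r al * G + (pol \Po F) = 0.
  by rewrite -(wembed_relation _ _ _ hE) /wembedC rD mpolyC0 polyC0 mul0r.
have sizeF : size F = (wdeg p q f).+1.
  have [m [mW fm]] := f_top.
  by apply/eqP; rewrite eqn_leq size_wembed -mW size_wembed_gt.
have size_pol : (size pol <= 1)%N.
  apply: (size_le1_comp_poly (F := F)); first by rewrite sizeF ltnS (leq_ltn_trans _ g_below).
  rewrite (_ : pol \Po F = - (wembedC r al * G)) ?size_polyN; last first.
    by apply/eqP; rewrite -addr_eq0 addrC relE.
  rewrite /wembedC mul_polyC sizeF ltnS (leq_trans (size_scale_leq _ _)) //.
  exact: leq_trans (size_wembed _ _ _ g) g_below.
have be_pos i : (0 < i < N)%N -> r (be i) = 0.
  case/andP=> i_gt0 iN; have := nth_default 0 (leq_trans size_pol i_gt0).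
  by rewrite coef_poly iN => /(congr1 (mcoeff 0)); rewrite mpolyCK mcoeff0.
move: relE; rewrite (size1_polyC size_pol) comp_polyC => relE.
have be0 : (0 < N)%N -> r (be 0) = 0.
  move=> N_gt0; have := congr1 (fun P : {poly {mpoly K[2]}} => P`_0@_0) relE.
  rewrite coef0 mcoeff0 coefD coefC mcoeffD.
  rewrite coefCM mcoeffCM coef_wembed g0 rmorph0.
  by rewrite !mulr0 add0r coef_poly N_gt0 mpolyCK.
have pol0 : pol`_0 = 0.
  by rewrite coef_poly; case: ifP => // /be0 ->; rewrite mpolyC0.
have G_neq0 : G != 0.
  by have [m gm] := g_nz; rewrite -size_poly_gt0 (leq_ltn_trans _ (size_wembed_gt _ _ gm)).
move/eqP: relE; rewrite pol0 polyC0 addr0 mulf_eq0 (negPf G_neq0) orbF.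
rewrite polyC_eq0 mpolyC_eq0 => /eqP ral; split=> // -[|i] iN; first exact: be0.
exact: be_pos.
Qed.

End WeightedRelation.

Section Descent.
Variables (k : fieldType) (pi : {poly k}) (pi_mi : monic_irreducible_poly pi) (p q : nat).
Variables f g : {mpoly {poly k}[2]}.
Hypothesis f_top : exists m, mwdeg p q m = wdeg p q f /\ ~~ (pi %| f@_m).
Hypothesis g_below : (wdeg p q g < wdeg p q f)%N.
Hypothesis g_ndvdp : exists m, ~~ (pi %| g@_m).
Hypothesis g0 : g@_0 = 0.

Definition residue (a : {poly k}) : {poly %/ pi with pi_mi} := in_qpoly pi a.
HB.instance Definition _ := GRing.RMorphism.copy residue (in_qpoly pi).

Lemma residue_eq0 a : (residue a == 0) = (pi %| a).
Proof. by rewrite dvdpE /Pdiv.Ring.rdvdp -val_eqE /= (mk_monicE pi_mi). Qed.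

Lemma relation_dvdp h D al (be : nat -> {poly k}) N :
  pi %| D -> D *: h = al *: g + \sum_(i < N) be i *: f ^+ i ->
  pi %| al /\ forall i, (i < N)%N -> pi %| be i.
Proof.
move=> piD hE.
have rdvdp a : residue a = 0 <-> pi %| a by rewrite -residue_eq0; split=> /eqP.
have f_top' : exists m, mwdeg p q m = wdeg p q f /\ residue f@_m != 0.
  by have [m [mW fm]] := f_top; exists m; rewrite residue_eq0.
have g_nz : exists m, residue g@_m != 0.
  by have [m gm] := g_ndvdp; exists m; rewrite residue_eq0.
have [/rdvdp al_dvd be_dvd] :=
  relation_coefs_in_kernel f_top' g_below g_nz g0 (proj2 (rdvdp D) piD) hE.
by split=> // i /be_dvd /rdvdp.
Qed.

Lemma relation_coprime h D al (be : nat -> {poly k}) N :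
  D != 0 -> D *: h = al *: g + \sum_(i < N) be i *: f ^+ i ->
  exists D' al' (be' : nat -> {poly k}),
    coprimep pi D' /\ D' *: h = al' *: g + \sum_(i < N) be' i *: f ^+ i.
Proof.
have [n] := ubnP (size D); elim: n D al be => // n IH D al be sizeD D_neq0 hE.
have [cop|] := boolP (coprimep pi D); first by exists D, al, be.
rewrite (irreducible_poly_coprime _ pi_mi.1) negbK => piD.
have [pi_al pi_be] := relation_dvdp piD hE.
have pi_neq0 : pi != 0 := irredp_neq0 pi_mi.1.
apply: (IH (D %/ pi) (al %/ pi) (fun i => be i %/ pi)).
- rewrite size_divp //; apply: leq_trans (ltnSE sizeD).
  by rewrite ltn_subrL -subn1 subn_gt0 pi_mi.1.1 size_poly_gt0.
- by apply: contra_neq D_neq0 => D0; rewrite -(divpK piD) D0 mul0r.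
apply: (@mulfI _ pi%:MP); first by rewrite mpolyC_eq0.
rewrite !mul_mpolyC scalerDr scaler_sumr !scalerA !(mulrC pi) !divpK // hE.
by congr (_ + _); apply: eq_bigr => i _; rewrite scalerA mulrC divpK ?pi_be.
Qed.
End Descent.

Section FractionEmbedding.
Variable k : fieldType.
Implicit Types (P : {mpoly {poly k}[2]}).

Fact toK_is_zmod_morphism : zmod_morphism (@toK k).
Proof. by move=> P Q; rewrite /toK rmorphB. Qed.
HB.instance Definition _ := GRing.isZmodMorphism.Build _ _ (@toK k) toK_is_zmod_morphism.

Fact toK_is_monoid_morphism : monoid_morphism (@toK k).
Proof. by split=> [|P Q]; rewrite /toK ?rmorph1 // rmorphM. Qed.
HB.instance Definition _ := GRing.isMonoidMorphism.Build _ _ (@toK k) toK_is_monoid_morphism.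

Lemma toKZ c P : toK (c *: P) = tofrac c *: toK P.
Proof. exact: map_mpolyZ. Qed.

Lemma mcoeff_toK P m : (toK P)@_m = tofrac P@_m.
Proof. exact: mcoeff_map_mpoly. Qed.

Lemma toK_inj : injective (@toK k).
Proof.
move=> P Q PQ; apply/mpolyP => m.
by apply/eqP; rewrite -tofrac_eq -!mcoeff_toK PQ.
Qed.

Lemma clear_denominators (f g h : {mpoly {poly k}[2]}) u1 v0
    (F0 : {poly {fraction {poly k}}}) :
  toK h = u1 *: (v0 *: toK g + peval F0 (toK f)) ->
  exists D al (be : nat -> {poly k}),
    D != 0 /\ D *: h = al *: g + \sum_(i < size F0) be i *: f ^+ i.
Proof.
move=> hE.
have [D [num [D_neq0 Dnum]]] := common_denominator (u1 * v0 :: [seq u1 * c | c <- F0]).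
exists D, (num (u1 * v0)), (fun i => num (u1 * F0`_i)); split=> //; apply: toK_inj.
rewrite toKZ hE rmorphD rmorph_sum /= toKZ -Dnum ?mem_head // /peval.
rewrite scalerA scalerDr scalerA; congr (_ + _); first by congr (_ *: _); ring.
rewrite scaler_sumr; apply: eq_bigr => i _.
rewrite toKZ rmorphXn -Dnum ?scalerA; first by congr (_ *: _); ring.
by rewrite in_cons map_f ?orbT ?mem_nth.
Qed.
End FractionEmbedding.

Theorem proposition4p13 (k : fieldType) (f g : {mpoly {poly k}[2]}) :
  [pchar k] =i pred0 ->
  (1 < size (gcdp (dcont (linpart f)) (dcont (linpart g))))%N ->
  primitive g ->
  g@_0 = 0 ->
  (exists p q : nat,
      (p, q) != (0%N, 0%N) /\
      primitive (wtop p q f) /\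
      (wdeg p q (wtop p q g) < wdeg p q (wtop p q f))%N) ->
  ~ exists (zeta : {mpoly {poly k}[2]} -> {mpoly {poly k}[2]})
           (u1 v0 : {fraction {poly k}}) (F0 : {poly {fraction {poly k}}}),
      kx_automorphism zeta /\
      toK (zeta 'X_yvar) = u1 *: (v0 *: toK g + peval F0 (toK f)).
Proof.
move=> _ gcd_gt1 g_prim g0 [p [q [_ [wtop_f_prim wdeg_lt]]]].
move=> [zeta [u1 [v0 [F0 [zeta_aut zetaE]]]]].
have [pi pi_mi pi_gcd] := monic_irreducible_dvdp gcd_gt1.
have pi_gt1 : (1 < size pi)%N := pi_mi.1.1.
have f_top : exists m, mwdeg p q m = wdeg p q f /\ ~~ (pi %| f@_m).
  have [m] := primitive_ndvdp_mcoeff pi_gt1 wtop_f_prim; rewrite mcoeff_wtop.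
  by case: eqP => [mW fm|_]; [exists m | rewrite dvdp0].
have g_below : (wdeg p q g < wdeg p q f)%N by rewrite -(wdeg_wtop p q g) -(wdeg_wtop p q f).
have [D [al [be [D_neq0 zetaD]]]] := clear_denominators zetaE.
have [D' [al' [be' [pi_D' zetaD']]]] := relation_coprime pi_mi f_top g_below
  (primitive_ndvdp_mcoeff pi_gt1 g_prim) g0 D_neq0 zetaD.
have pi_lin P i : pi %| dcont (linpart P) -> pi %| P@_U_(i).
  by move/dvdp_trans; apply; apply: dcont_linpart_dvdp_mcoeffU.
apply: (kx_automorphism_lincoef_ndvdp pi_gt1 zeta_aut).
apply: (relation_lincoef_dvdp _ _ pi_D' zetaD') => i; apply: pi_lin.
  exact: dvdp_trans pi_gcd (dvdp_gcdl _ _).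
exact: dvdp_trans pi_gcd (dvdp_gcdr _ _).
Qed.
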